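(* Let $\mathcal{K}_1=(\mathcal{R}_1,\mathcal{T}_1)$ and $\mathcal{K}_2=(\mathcal{R}_2,\mathcal{T}_2)$ be $\mathcal{ALCP}$ knowledge bases with $\mathrm{sig}(\mathcal{K}_1)\cap\mathrm{sig}(\mathcal{K}_2)=\emptyset$, such that $\mathcal{K}_1$ and $\mathcal{K}_1\cup\mathcal{K}_2=(\mathcal{R}_1\cup\mathcal{R}_2,\mathcal{T}_1\cup\mathcal{T}_2)$ are ME-consistent, where $\mathcal{K}_1\cup\mathcal{K}_2$ is taken over the propositional language whose signature is the union of those of $\mathcal{K}_1$ and $\mathcal{K}_2$. Let $C,D$ be concepts and $\kappa$ a context with $(\mathrm{sig}(C)\cup\mathrm{sig}(D)\cup\mathrm{sig}(\kappa))\cap\mathrm{sig}(\mathcal{K}_2)=\emptyset$. Then $\mathcal{B}_{\mathcal{K}_1}(C\sqsubseteq D\mid\kappa)=\mathcal{B}_{\mathcal{K}_1\cup\mathcal{K}_2}(C\sqsubseteq D\mid\kappa)$.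
   Context: For a propositional language $\mathcal{L}$ over a finite set of variables, $\mathrm{Int}(\mathcal{L})$ is the set of truth assignments. A probability distribution over $\mathcal{L}$ is $P:\mathrm{Int}(\mathcal{L})\to[0,1]$ summing to $1$, with $P(\phi)=\sum_{v\models\phi}P(v)$. A probabilistic constraint is $c_0+\sum_{i=1}^k c_i\,\mathsf{p}(\phi_i)\ge 0$ ($c_i\in\mathbb{R}$, $\phi_i\in\mathcal{L}$), satisfied by $P$ iff $c_0+\sum_ic_iP(\phi_i)\ge0$; $\mathrm{Mod}(\mathcal{R})$ is the set of distributions satisfying all constraints in $\mathcal{R}$; for consistent $\mathcal{R}$, $P^{ME}_{\mathcal{R}}$ is the unique maximizer in $\mathrm{Mod}(\mathcal{R})$ of $H(P)=-\sum_vP(v)\log P(v)$. Concepts: $C::=A\mid\neg C\mid C\sqcap C\mid\exists r.C$. An $\mathcal{L}$-GCI is $\langle C\sqsubseteq D:\kappa\rangle$, $\kappa\in\mathcal{L}$; an $\mathcal{L}$-TBox is a finite set of them; a KB is $\mathcal{K}=(\mathcal{R},\mathcal{T})$. $\mathrm{sig}(\mathcal{T})$ is the set of concept and role names occurring in $\mathcal{T}$, $\mathrm{sig}(\mathcal{R})$ the set of propositional variables occurring in $\mathcal{R}$, and $\mathrm{sig}(\mathcal{K})=\mathrm{sig}(\mathcal{R})\cup\mathrm{sig}(\mathcal{T})$; $\mathrm{sig}(C)$ and $\mathrm{sig}(\kappa)$ are the symbols occurring in $C$ and $\kappa$. A possible world $\mathcal{I}=(\Delta^{\mathcal{I}},\cdot^{\mathcal{I}},v^{\mathcal{I}})$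 is a classical $\mathcal{ALC}$ interpretation together with $v^{\mathcal{I}}\in\mathrm{Int}(\mathcal{L})$; it models $\langle C\sqsubseteq D:\kappa\rangle$ iff $v^{\mathcal{I}}\not\models\kappa$ or $C^{\mathcal{I}}\subseteq D^{\mathcal{I}}$. An $\mathcal{ALCP}$-interpretation $\mathcal{P}=(\mathfrak{I},P_{\mathfrak{I}})$ is a nonempty finite set of possible worlds with a probability distribution on it; $P^{\mathcal{P}}(v)=\sum_{\mathcal{I}\in\mathfrak{I},v^{\mathcal{I}}=v}P_{\mathfrak{I}}(\mathcal{I})$. $\mathcal{P}$ is an ME-$\mathcal{ALCP}$-model of $\mathcal{K}$ iff all its worlds model every GCI of $\mathcal{T}$ and $P^{\mathcal{P}}=P^{ME}_{\mathcal{R}}$; $\mathrm{Mod}_{ME}(\mathcal{K})$ is the set of these; $\mathcal{K}$ is ME-consistent iff it is nonempty. $\Pr_{\mathcal{P}}(C\sqsubseteq D\mid\kappa)=\big(\sum_{\mathcal{I}\in\mathfrak{I},v^{\mathcal{I}}\models\kappa,C^{\mathcal{I}}\subseteq D^{\mathcal{I}}}P_{\mathfrak{I}}(\mathcal{I})\big)/\big(\sum_{\mathcal{I}\in\mathfrak{I},v^{\mathcal{I}}\models\kappa}P_{\mathfrak{I}}(\mathcal{I})\big)$. The belief interval $\mathcal{B}_{\mathcal{K}}(C\sqsubseteq D\mid\kappa)$ is $[\inf,\sup]$ of $\Pr_{\mathcal{P}}(C\sqsubseteq D\mid\kappa)$ over $\mathcal{P}\in\mathrm{Mod}_{ME}(\mathcal{K})$.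 *)

From Stdlib Require List.
From HB Require Import structures.
From mathcomp Require Import all_boot all_order all_algebra.
From mathcomp Require Import finmap.
From mathcomp Require Import boolp classical_sets reals exp.
Set Implicit Arguments.
Unset Strict Implicit.
Unset Printing Implicit Defensive.
Import Order.TTheory GRing.Theory Num.Theory.
Local Open Scope ring_scope.


Inductive pform : Type :=
  | PTrue
  | PVar of nat
  | PNot of pform
  | PAnd of pform & pform
  | POr of pform & pform.

Fixpoint pvars (f : pform) : seq nat :=
  match f with
  | PTrue => [::]
  | PVar x => [:: x]
  | PNot g => pvars g
  | PAnd g h => pvars g ++ pvars h
  | POr g h => pvars g ++ pvars h
  end.

Definition assignment (S : {fset nat}) := {ffun S -> bool}.

Definition eval_var (S : {fset nat}) (v : assignment S) (x : nat) : bool :=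
  match (insub x : option S) with Some s => v s | None => false end.

Fixpoint sat (S : {fset nat}) (v : assignment S) (f : pform) : bool :=
  match f with
  | PTrue => true
  | PVar x => eval_var v x
  | PNot g => ~~ sat v g
  | PAnd g h => sat v g && sat v h
  | POr g h => sat v g || sat v h
  end.

Definition in_lang (S : {fset nat}) (f : pform) : bool :=
  all (fun x => x \in S) (pvars f).

Definition is_distr (R : realType) (S : {fset nat}) (P : assignment S -> R) :=
  (forall v, 0 <= P v) /\ \sum_(v : assignment S) P v = 1.

Definition prob (R : realType) (S : {fset nat}) (P : assignment S -> R)
  (f : pform) : R := \sum_(v : assignment S | sat v f) P v.

(* probabilistic constraint  c0 + sum_i c_i p(phi_i) >= 0 *)
Record pconstraint (R : realType) := PConstr {
  pc_c0 : R;
  pc_terms : seq (R * pform) }.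

Definition pc_vars (R : realType) (c : pconstraint R) : seq nat :=
  flatten [seq pvars t.2 | t <- pc_terms c].

Definition pc_sat (R : realType) (S : {fset nat}) (P : assignment S -> R)
  (c : pconstraint R) : Prop :=
  0 <= pc_c0 c + \sum_(t <- pc_terms c) t.1 * prob P t.2.

Definition ModR (R : realType) (S : {fset nat}) (Rs : seq (pconstraint R))
  (P : assignment S -> R) : Prop :=
  is_distr P /\ forall c, List.In c Rs -> pc_sat P c.

(* entropy, with 0 log 0 = 0 (ln 0 = 0 in mathcomp-analysis) *)
Definition entropy (R : realType) (S : {fset nat}) (P : assignment S -> R) : R :=
  - \sum_(v : assignment S) P v * ln (P v).

(* P is the maximum-entropy model P^ME_R of Rs (the maximizer is unique
   whenever Rs is consistent, so this characterizes P^ME_R). *)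
Definition is_ME (R : realType) (S : {fset nat}) (Rs : seq (pconstraint R))
  (P : assignment S -> R) : Prop :=
  ModR Rs P /\ forall Q : assignment S -> R, ModR Rs Q -> entropy Q <= entropy P.

Inductive concept : Type :=
  | CName of nat
  | CNot of concept
  | CAnd of concept & concept
  | CEx of nat & concept.

Fixpoint cnames (C : concept) : seq nat :=
  match C with
  | CName A => [:: A]
  | CNot C' => cnames C'
  | CAnd C1 C2 => cnames C1 ++ cnames C2
  | CEx _ C' => cnames C'
  end.

Fixpoint rnames (C : concept) : seq nat :=
  match C with
  | CName _ => [::]
  | CNot C' => rnames C'
  | CAnd C1 C2 => rnames C1 ++ rnames C2
  | CEx r C' => r :: rnames C'
  end.

Record gci := GCI { g_lhs : concept; g_rhs : concept; g_ctx : pform }.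

Record kb (R : realType) := KB {
  kb_lang : {fset nat};
  kb_R : seq (pconstraint R);
  kb_T : seq gci }.

Definition kb_wf (R : realType) (K : kb R) : Prop :=
  (forall c, List.In c (kb_R K) -> all (fun x => x \in kb_lang K) (pc_vars c)) /\
  (forall g, List.In g (kb_T K) -> in_lang (kb_lang K) (g_ctx g)).

Definition sigR_vars (R : realType) (Rs : seq (pconstraint R)) : seq nat :=
  flatten [seq pc_vars c | c <- Rs].
Definition sigT_vars (T : seq gci) : seq nat :=
  flatten [seq pvars (g_ctx g) | g <- T].
Definition sigT_cnames (T : seq gci) : seq nat :=
  flatten [seq cnames (g_lhs g) ++ cnames (g_rhs g) | g <- T].
Definition sigT_rnames (T : seq gci) : seq nat :=
  flatten [seq rnames (g_lhs g) ++ rnames (g_rhs g) | g <- T].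

Definition sig_vars (R : realType) (K : kb R) : seq nat :=
  sigR_vars (kb_R K) ++ sigT_vars (kb_T K).
Definition sig_cnames (R : realType) (K : kb R) : seq nat := sigT_cnames (kb_T K).
Definition sig_rnames (R : realType) (K : kb R) : seq nat := sigT_rnames (kb_T K).

Definition sig_disjoint (R : realType) (K1 K2 : kb R) : Prop :=
  [/\ forall x, x \in sig_vars K1 -> x \notin sig_vars K2,
      forall A, A \in sig_cnames K1 -> A \notin sig_cnames K2 &
      forall r, r \in sig_rnames K1 -> r \notin sig_rnames K2].

Definition kb_union (R : realType) (K1 K2 : kb R) : kb R :=
  KB (kb_lang K1 `|` kb_lang K2)%fset (kb_R K1 ++ kb_R K2) (kb_T K1 ++ kb_T K2).

Record world (S : {fset nat}) := World {
  w_dom : Type;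
  w_elt : w_dom;                         (* nonempty domain *)
  w_cext : nat -> w_dom -> Prop;
  w_rext : nat -> w_dom -> w_dom -> Prop;
  w_val : assignment S }.

Fixpoint cext (S : {fset nat}) (I : world S) (C : concept) : w_dom I -> Prop :=
  match C with
  | CName A => @w_cext S I A
  | CNot C' => fun x => ~ @cext S I C' x
  | CAnd C1 C2 => fun x => @cext S I C1 x /\ @cext S I C2 x
  | CEx r C' => fun x => exists y, @w_rext S I r x y /\ @cext S I C' y
  end.

Definition subsumed (S : {fset nat}) (I : world S) (C D : concept) : Prop :=
  forall x, @cext S I C x -> @cext S I D x.

Definition models_gci (S : {fset nat}) (I : world S) (g : gci) : Prop :=
  ~~ sat (w_val I) (g_ctx g) \/ subsumed I (g_lhs g) (g_rhs g).

(* A finite family of possible worlds with a probability distribution on it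
   (a family rather than a set: repeated worlds just add up their weights). *)
Record alcp_interp (R : realType) (S : {fset nat}) := ALCPInterp {
  ai_idx : finType;
  ai_world : ai_idx -> world S;
  ai_prob : ai_idx -> R;
  ai_prob_ge0 : forall i, 0 <= ai_prob i;
  ai_prob_sum1 : \sum_(i : ai_idx) ai_prob i = 1 }.

Definition marginal (R : realType) (S : {fset nat}) (P : alcp_interp R S)
  (v : assignment S) : R :=
  \sum_(i : ai_idx P | w_val (@ai_world _ _ P i) == v) @ai_prob _ _ P i.

Definition is_ME_model (R : realType) (K : kb R)
  (P : alcp_interp R (kb_lang K)) : Prop :=
  (forall i g, List.In g (kb_T K) -> models_gci (@ai_world _ _ P i) g) /\
  is_ME (kb_R K) (marginal P).

Definition ME_consistent (R : realType) (K : kb R) : Prop :=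
  exists P : alcp_interp R (kb_lang K), is_ME_model P.

(* Pr_P(C [= D | kappa); division by 0 yields 0 *)
Definition cond_prob (R : realType) (S : {fset nat}) (P : alcp_interp R S)
  (C D : concept) (kappa : pform) : R :=
  (\sum_(i : ai_idx P | sat (w_val (@ai_world _ _ P i)) kappa &&
          `[< subsumed (@ai_world _ _ P i) C D >]) @ai_prob _ _ P i) /
  (\sum_(i : ai_idx P | sat (w_val (@ai_world _ _ P i)) kappa) @ai_prob _ _ P i).

Definition belief_values (R : realType) (K : kb R) (C D : concept)
  (kappa : pform) : set R :=
  [set x | exists P : alcp_interp R (kb_lang K), is_ME_model P /\
                                               cond_prob P C D kappa = x].

Definition belief_interval (R : realType) (K : kb R) (C D : concept)
  (kappa : pform) : R * R :=
  (inf (belief_values K C D kappa), sup (belief_values K C D kappa)).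

(* Let A be the variables of K1 that do not occur in K2.  The constraints of K1
   live on A and those of K2 on the remaining variables; since entropy is
   additive on independent products and subadditive on marginals, the marginal
   on A of an ME distribution for R1 ++ R2 is ME for R1 alone, and by strict
   concavity of entropy the ME distribution is unique.  Hence every ME model of
   K1 and every ME model of K1 u K2 have the same marginal on A.
   Given an ME model P of one knowledge base and any ME model Q of the other,
   glue them along that marginal: pair worlds i, j agreeing on A with weight
   p_i q_j / m(u), and combine the two worlds so that the TBox of the target
   holds (reading the names of K2 in the world of Q, all other names in the
   world of P, on the product domain) while the valuation is that of Q.  The
   result is an ME model of the target whose conditional probability for
   C [= D | kappa, which only involves A and names outside K2, is that of P.
   So both knowledge bases have the same set of belief values. *)

From HB Require Import structures.
From mathcomp Require Import all_boot all_order all_algebra.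
From mathcomp Require Import finmap.
From mathcomp Require Import boolp classical_sets reals exp.
From mathcomp Require Import ring lra.
Set Implicit Arguments.
Unset Strict Implicit.
Unset Printing Implicit Defensive.
Import Order.TTheory GRing.Theory Num.Theory.
Local Open Scope ring_scope.

Section Entropy.
Variable R : realType.

Lemma ln_le_subr1 (x : R) : 0 < x -> ln x <= x - 1 ?= iff (x == 1).
Proof.
move=> x0; split; first by have := expR_ge1Dx (ln x); rewrite lnK ?posrE // lerBrDl.
have [->|x1] := eqVneq x 1; first by rewrite ln1 subrr eqxx.
rewrite lt_eqF //; have : ln x != 0 by rewrite ln_eq0.
by move/expR_gt1Dx; rewrite lnK ?posrE // ltrBrDl.
Qed.

Lemma xlnx_tangent (m t : R) : 0 < m -> 0 <= t ->
  t - m <= t * ln t - t * ln m ?= iff (t == m).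
Proof.
move=> m0 t0; apply/leifP; have [->|t_neq_m] := eqVneq t m; first by rewrite !subrr.
have [->|t_neq0] := eqVneq t 0; first by rewrite !mul0r subrr sub0r oppr_lt0.
have tp : 0 < t by rewrite lt_def t_neq0 t0.
have mt1 : m / t != 1.
  by apply: contraNneq t_neq_m => /(congr1 ( *%R^~ t)); rewrite divfK // mul1r => ->.
have := lt_leif (ln_le_subr1 (divr_gt0 m0 tp)); rewrite mt1 /= => lt_ln.
have -> : t * ln t - t * ln m = - (t * ln (m / t)) by rewrite ln_div ?posrE //; ring.
have -> : t - m = - (t * (m / t - 1)) by field.
by rewrite ltrN2 ltr_pM2l.
Qed.

Lemma xlnx_midpoint (a b : R) : 0 <= a -> 0 <= b ->
  2 * ((a + b) / 2 * ln ((a + b) / 2)) <= a * ln a + b * ln b ?= iff (a == b).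
Proof.
move=> a0 b0; set m := (a + b) / 2.
have [/eqP|ab_neq0] := eqVneq (a + b) 0.
  rewrite paddr_eq0 // => /andP[/eqP a_eq0 /eqP b_eq0].
  rewrite /m a_eq0 b_eq0 addr0 !mul0r mulr0 addr0; exact/leif_refl.
have m0 : 0 < m by rewrite divr_gt0 // lt_def ab_neq0 addr_ge0.
have := leifD (xlnx_tangent m0 a0) (xlnx_tangent m0 b0).
have -> : a - m + (b - m) = 0 by rewrite /m; field.
have -> : ((a == m) && (b == m)) = (a == b).
  apply/andP/eqP => [[/eqP -> /eqP ->] //|ab].
  by rewrite /m ab; split; apply/eqP; field.
have -> : a * ln a - a * ln m + (b * ln b - b * ln m) =
    a * ln a + b * ln b - 2 * (m * ln m) by rewrite /m; field.
by rewrite leifBRL add0r.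
Qed.

Lemma gibbs_inequality (T : finType) (P Q : T -> R) :
  (forall x, 0 <= P x) -> (forall x, 0 <= Q x) -> (forall x, 0 < P x -> 0 < Q x) ->
  \sum_x Q x = \sum_x P x -> \sum_x P x * ln (Q x) <= \sum_x P x * ln (P x).
Proof.
move=> P0 Q0 PQ sumQP; rewrite -subr_ge0 -sumrB.
have term x : P x - Q x <= P x * ln (P x) - P x * ln (Q x).
  have [->|Px_neq0] := eqVneq (P x) 0; first by rewrite !mul0r subrr sub0r oppr_le0.
  have Qx : 0 < Q x by apply: PQ; rewrite lt_def Px_neq0 P0.
  exact: xlnx_tangent Qx (P0 x).
by apply: le_trans (ler_sum _ (fun x _ => term x)); rewrite sumrB sumQP subrr.
Qed.

Definition fin_entropy (T : finType) (P : T -> R) : R := - \sum_x P x * ln (P x).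

Definition is_fdistr (T : finType) (P : T -> R) := (forall x, 0 <= P x) /\ \sum_x P x = 1.

Definition entropy_max (T : finType) (M : (T -> R) -> Prop) (P : T -> R) :=
  M P /\ forall Q, M Q -> fin_entropy Q <= fin_entropy P.

Lemma entropy_max_unique (T : finType) (M : (T -> R) -> Prop) (P Q : T -> R) :
  (forall P Q, M P -> M Q -> M (fun x => (P x + Q x) / 2)) ->
  (forall P, M P -> forall x, 0 <= P x) ->
  entropy_max M P -> entropy_max M Q -> P = Q.
Proof.
move=> M_mid M_ge0 [MP maxP] [MQ maxQ].
have mid_le := leif_sum (P := predT) (fun x _ => xlnx_midpoint (M_ge0 _ MP x) (M_ge0 _ MQ x)).
suff /forallP PQ : [forall x, P x == Q x] by apply: funext => x; apply/eqP/PQ.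
rewrite -(eq_leif mid_le); apply/eqP/le_anti; rewrite mid_le /=.
have := maxP _ (M_mid _ _ MP MQ); have := maxP _ MQ; have := maxQ _ MP.
rewrite /fin_entropy big_split /= -mulr_sumr; lra.
Qed.

Definition marg (T T' : finType) (f : T -> T') (P : T -> R) (u : T') : R :=
  \sum_(w | f w == u) P w.

Section Marginal.
Variables (T T' : finType) (f : T -> T').

Lemma sum_marg_pred (g : pred T') (P : T -> R) :
  \sum_(w | g (f w)) P w = \sum_(u | g u) marg f P u.
Proof.
rewrite (partition_big f g) //; apply: eq_bigr => u gu; apply: eq_bigl => w.
by case: eqP => [->|]; rewrite ?gu ?andbF.
Qed.

Lemma sum_marg (P : T -> R) : \sum_u marg f P u = \sum_w P w.
Proof. by rewrite -(sum_marg_pred predT). Qed.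

Lemma sum_marg_mul (P : T -> R) (G : T' -> R) :
  \sum_w P w * G (f w) = \sum_u marg f P u * G u.
Proof.
rewrite (partition_big f predT) //; apply: eq_bigr => u _.
by rewrite /marg mulr_suml; apply: eq_bigr => w /eqP ->.
Qed.

Lemma marg_ge (P : T -> R) w : (forall x, 0 <= P x) -> P w <= marg f P (f w).
Proof. by move=> P0; rewrite /marg (bigD1 w) //= lerDl sumr_ge0. Qed.

Lemma fdistr_marg (P : T -> R) : is_fdistr P -> is_fdistr (marg f P).
Proof. by move=> [P0 P1]; split; [move=> u; exact: sumr_ge0 | rewrite sum_marg]. Qed.

End Marginal.

Section ProductDecomposition.
Variables (W U V : finType) (fa : W -> U) (fb : W -> V) (join : U -> V -> W).
Hypotheses (join_fa : forall u v, fa (join u v) = u)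
  (join_fb : forall u v, fb (join u v) = v)
  (split_join : forall w, join (fa w) (fb w) = w).

Definition prod_distr (PA : U -> R) (PB : V -> R) (w : W) : R := PA (fa w) * PB (fb w).

Lemma sum_fiber_fa u (F : V -> R) : \sum_(w | fa w == u) F (fb w) = \sum_v F v.
Proof.
rewrite (reindex_onto (join u) fb) => [|w /eqP <-]; last exact: split_join.
apply: eq_big => [v|v _]; last by rewrite join_fb.
by apply/andP; split; apply/eqP; [exact: join_fa | exact: join_fb].
Qed.

Lemma sum_fiber_fb v (F : U -> R) : \sum_(w | fb w == v) F (fa w) = \sum_u F u.
Proof.
rewrite (reindex_onto (join^~ v) fa) => [|w /eqP <-]; last exact: split_join.
apply: eq_big => [u'|u' _]; last by rewrite join_fa.
by apply/andP; split; apply/eqP; [exact: join_fb | exact: join_fa].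
Qed.

Lemma marg_prod_fa PA PB : \sum_v PB v = 1 -> marg fa (prod_distr PA PB) = PA.
Proof.
move=> PB1; apply: funext => u; rewrite /marg /prod_distr.
rewrite (eq_bigr (fun w => PA u * PB (fb w))) => [|w /eqP -> //].
by rewrite -mulr_sumr sum_fiber_fa PB1 mulr1.
Qed.

Lemma marg_prod_fb PA PB : \sum_u PA u = 1 -> marg fb (prod_distr PA PB) = PB.
Proof.
move=> PA1; apply: funext => v; rewrite /marg /prod_distr.
rewrite (eq_bigr (fun w => PA (fa w) * PB v)) => [|w /eqP -> //].
by rewrite -mulr_suml sum_fiber_fb PA1 mul1r.
Qed.

Lemma fdistr_prod PA PB : is_fdistr PA -> is_fdistr PB -> is_fdistr (prod_distr PA PB).
Proof.
move=> [PA0 PA1] [PB0 PB1]; split=> [w|]; first exact: mulr_ge0.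
by rewrite -(sum_marg fa) marg_prod_fa.
Qed.

Lemma sum_mul_ln_prod (P : W -> R) PA PB :
  (forall w, P w != 0 -> 0 < PA (fa w) /\ 0 < PB (fb w)) ->
  \sum_w P w * ln (prod_distr PA PB w) =
  \sum_u marg fa P u * ln (PA u) + \sum_v marg fb P v * ln (PB v).
Proof.
move=> Ppos; rewrite -sum_marg_mul -sum_marg_mul -big_split /=.
apply: eq_bigr => w _; have [->|/Ppos[PA0 PB0]] := eqVneq (P w) 0.
  by rewrite !mul0r addr0.
by rewrite /prod_distr lnM ?posrE // mulrDr.
Qed.

Lemma entropy_prod PA PB : is_fdistr PA -> is_fdistr PB ->
  fin_entropy (prod_distr PA PB) = fin_entropy PA + fin_entropy PB.
Proof.
move=> [PA0 PA1] [PB0 PB1]; rewrite /fin_entropy -opprD; congr (- _).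
rewrite sum_mul_ln_prod ?marg_prod_fa ?marg_prod_fb // => w.
rewrite mulf_eq0 negb_or => /andP[PAw PBw].
by rewrite !lt_def PAw PBw PA0 PB0.
Qed.

Lemma entropy_subadditive P : is_fdistr P ->
  fin_entropy P <= fin_entropy (marg fa P) + fin_entropy (marg fb P).
Proof.
move=> dP; have [P0 P1] := dP.
have dPAB := fdistr_prod (fdistr_marg fa dP) (fdistr_marg fb dP).
have marg_pos w : P w != 0 -> 0 < marg fa P (fa w) /\ 0 < marg fb P (fb w).
  move=> Pw; have Pw0 : 0 < P w by rewrite lt_def Pw P0.
  by split; apply: lt_le_trans Pw0 (marg_ge _ _ P0).
have := gibbs_inequality P0 dPAB.1 _ (etrans dPAB.2 (esym P1)).
rewrite sum_mul_ln_prod // /fin_entropy -opprD lerN2; apply.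
by move=> w /lt0r_neq0 /marg_pos[PAw PBw]; apply: mulr_gt0.
Qed.

Lemma entropy_max_marg (MW : (W -> R) -> Prop) (MU : (U -> R) -> Prop)
    (MV : (V -> R) -> Prop) (P : W -> R) :
  (forall P, MW P -> [/\ is_fdistr P, MU (marg fa P) & MV (marg fb P)]) ->
  (forall QA QB, MU QA -> MV QB -> MW (prod_distr QA QB)) ->
  (forall Q, MU Q -> is_fdistr Q) -> (forall Q, MV Q -> is_fdistr Q) ->
  entropy_max MW P -> entropy_max MU (marg fa P).
Proof.
move=> MW_marg MW_prod MU_distr MV_distr [MP maxP].
have [dP MPA MPB] := MW_marg _ MP; split=> // Q MQ.
have := maxP _ (MW_prod _ _ MQ MPB).
rewrite (entropy_prod (MU_distr _ MQ) (MV_distr _ MPB)).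
have := entropy_subadditive dP; lra.
Qed.

End ProductDecomposition.
End Entropy.

Definition restr (S T : {fset nat}) (v : assignment S) : assignment T :=
  [ffun t : T => eval_var v (val t)].

Lemma eval_var_val (S : {fset nat}) (v : assignment S) (s : S) : eval_var v (val s) = v s.
Proof. by rewrite /eval_var valK. Qed.

Lemma eval_var_restr (S T : {fset nat}) (v : assignment S) x :
  x \in T -> eval_var (restr T v) x = eval_var v x.
Proof.
move=> xT; rewrite {1}/eval_var; case: insubP => [t _ <-|]; last by rewrite xT.
by rewrite ffunE.
Qed.

Lemma sat_restr (S T : {fset nat}) (v : assignment S) f :
  in_lang T f -> sat (restr T v) f = sat v f.
Proof.
rewrite /in_lang; elim: f => //= [x|g IH|g IHg h IHh|g IHg h IHh].
- by rewrite andbT => /eval_var_restr.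
- by move/IH ->.
- by rewrite all_cat => /andP[/IHg -> /IHh ->].
- by rewrite all_cat => /andP[/IHg -> /IHh ->].
Qed.

Lemma sat_eq_restr (S1 S2 A : {fset nat}) (v1 : assignment S1) (v2 : assignment S2) f :
  in_lang A f -> restr A v1 = restr A v2 -> sat v1 f = sat v2 f.
Proof. by move=> fA e; rewrite -(sat_restr v1 fA) -(sat_restr v2 fA) e. Qed.

Definition join_assign (S A : {fset nat}) (u : assignment A)
    (v : assignment (S `\` A)%fset) : assignment S :=
  [ffun s : S => if val s \in A then eval_var u (val s) else eval_var v (val s)].

Section JoinAssign.
Variables (S A : {fset nat}).
Hypothesis subAS : {subset A <= S}.

Lemma restr_join_assign_l u v : restr A (@join_assign S A u v) = u.
Proof.
apply/ffunP => a; rewrite ffunE.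
have aS : val a \in S by apply: subAS; exact: valP.
rewrite /eval_var; case: insubP => [s _ sa|]; last by rewrite aS.
by rewrite ffunE sa (valP a) eval_var_val.
Qed.

Lemma restr_join_assign_r u v : restr (S `\` A)%fset (@join_assign S A u v) = v.
Proof.
apply/ffunP => b; rewrite ffunE.
have := valP b; rewrite !inE => /andP[bA bS].
rewrite /eval_var; case: insubP => [s _ sb|]; last by rewrite bS.
by rewrite ffunE sb (negbTE bA) eval_var_val.
Qed.

Lemma join_assign_restr w : join_assign (restr A w) (restr (S `\` A)%fset w) = w.
Proof.
apply/ffunP => s; rewrite ffunE; case: ifP => sA.
  by rewrite eval_var_restr // eval_var_val.
by rewrite eval_var_restr ?eval_var_val // !inE sA (valP s).
Qed.

End JoinAssign.

Definition constraints_in (R : realType) (T : {fset nat}) (Rs : seq (pconstraint R)) :=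
  forall c, List.In c Rs -> all (fun x => x \in T) (pc_vars c).

Section MaxEntropyModels.
Variable R : realType.

Lemma ModR_cat (S : {fset nat}) (Rs1 Rs2 : seq (pconstraint R)) (P : assignment S -> R) :
  ModR (Rs1 ++ Rs2) P <-> ModR Rs1 P /\ ModR Rs2 P.
Proof.
split=> [[dP satP]|[[dP sat1] [_ sat2]]].
  by split; split=> // c cin; apply: satP; apply: List.in_or_app; [left|right].
by split=> // c cin; case: (List.in_app_or _ _ _ cin); [apply: sat1|apply: sat2].
Qed.

Lemma prob_marg_restr (S T : {fset nat}) (P : assignment S -> R) f :
  in_lang T f -> prob (marg (@restr S T) P) f = prob P f.
Proof.
move=> fT; rewrite /prob -(sum_marg_pred (@restr S T) (fun u => sat u f)).
by apply: eq_bigl => v; rewrite sat_restr.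
Qed.

Lemma pc_sat_marg_restr (S T : {fset nat}) (P : assignment S -> R) c :
  all (fun x => x \in T) (pc_vars c) -> pc_sat (marg (@restr S T) P) c <-> pc_sat P c.
Proof.
rewrite /pc_sat /pc_vars; case: c => /= c0 ts; elim: ts c0 => [|t ts IH] c0 /=.
  by rewrite !big_nil.
rewrite all_cat !big_cons !addrA => /andP[/prob_marg_restr ->]; exact: IH.
Qed.

Lemma ModR_marg_restr (S T : {fset nat}) (Rs : seq (pconstraint R)) (P : assignment S -> R) :
  constraints_in T Rs -> ModR Rs P -> ModR Rs (marg (@restr S T) P).
Proof.
move=> RsT [dP satP]; split=> [|c cin]; first exact: fdistr_marg.
by apply/pc_sat_marg_restr; [exact: RsT | exact: satP].
Qed.

Lemma is_ME_marg_restr (S A : {fset nat}) (Rs1 Rs2 : seq (pconstraint R))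
    (P : assignment S -> R) :
  {subset A <= S} -> constraints_in A Rs1 -> constraints_in (S `\` A)%fset Rs2 ->
  is_ME (Rs1 ++ Rs2) P -> is_ME Rs1 (marg (@restr S A) P).
Proof.
move=> subAS Rs1A Rs2B.
have jl := restr_join_assign_l subAS; have jr := @restr_join_assign_r S A.
have rj := @join_assign_restr S A.
apply: (entropy_max_marg jl jr rj (MV := ModR Rs2)).
- move=> Q /ModR_cat[MQ1 MQ2]; split; first by case: MQ1.
  + exact: ModR_marg_restr.
  + exact: ModR_marg_restr.
- move=> QA QB [dA satA] [dB satB]; have dAB := fdistr_prod jl jr rj dA dB.
  apply/ModR_cat; split; split=> // c cin.
  + apply/(pc_sat_marg_restr _ (Rs1A c cin)).
    by rewrite (marg_prod_fa jl jr rj _ dB.2); apply: satA.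
  + apply/(pc_sat_marg_restr _ (Rs2B c cin)).
    by rewrite (marg_prod_fb jl jr rj _ dA.2); apply: satB.
- by move=> Q [].
- by move=> Q [].
Qed.

Lemma ModR_midpoint (S : {fset nat}) (Rs : seq (pconstraint R)) (P Q : assignment S -> R) :
  ModR Rs P -> ModR Rs Q -> ModR Rs (fun x => (P x + Q x) / 2).
Proof.
move=> [[P0 P1] satP] [[Q0 Q1] satQ]; split.
  split=> [x|]; first by rewrite divr_ge0 ?addr_ge0.
  by rewrite -mulr_suml big_split /= P1 Q1; field.
have prob_mid f : prob (fun x => (P x + Q x) / 2) f = (prob P f + prob Q f) / 2.
  by rewrite /prob -mulr_suml big_split.
move=> c cin; have := satP c cin; have := satQ c cin; rewrite /pc_sat => satQc satPc.
rewrite (eq_bigr (fun t => t.1 * ((prob P t.2 + prob Q t.2) / 2))) => [|t _]; last first.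
  by rewrite prob_mid.
have -> : \sum_(t <- pc_terms c) t.1 * ((prob P t.2 + prob Q t.2) / 2) =
    (\sum_(t <- pc_terms c) t.1 * prob P t.2 + \sum_(t <- pc_terms c) t.1 * prob Q t.2) / 2.
  by rewrite -big_split mulr_suml; apply: eq_bigr => t _; rewrite mulrA mulrDr.
lra.
Qed.

Lemma is_ME_unique (S : {fset nat}) (Rs : seq (pconstraint R)) (P Q : assignment S -> R) :
  is_ME Rs P -> is_ME Rs Q -> P = Q.
Proof.
apply: entropy_max_unique => [P' Q'|P' [[P'0 _] _] //]; exact: ModR_midpoint.
Qed.

Lemma is_ME_marg_restr_eq (S1 S2 A : {fset nat}) (Rs1 Rs2 : seq (pconstraint R))
    (P1 : assignment S1 -> R) (P2 : assignment S2 -> R) :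
  {subset A <= S1} -> {subset A <= S2} ->
  constraints_in A Rs1 -> constraints_in (S2 `\` A)%fset Rs2 ->
  is_ME Rs1 P1 -> is_ME (Rs1 ++ Rs2) P2 -> marg (@restr S1 A) P1 = marg (@restr S2 A) P2.
Proof.
move=> subA1 subA2 Rs1A Rs2B ME1 ME2.
apply: is_ME_unique (is_ME_marg_restr subA2 Rs1A Rs2B ME2).
apply: (is_ME_marg_restr (Rs2 := [::])) subA1 Rs1A _ _; first by move=> c [].
by rewrite cats0.
Qed.

End MaxEntropyModels.

Section Glue.
Variable R : realType.

Lemma divfK_bounded (x m : R) : 0 <= x -> x <= m -> x / m * m = x.
Proof.
move=> x0 xm; have [m0|m_neq0] := eqVneq m 0; last exact: divfK.
suff -> : x = 0 by rewrite !mul0r.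
by apply/le_anti; rewrite x0 andbT -m0.
Qed.

Lemma marg_restr_marginal (S A : {fset nat}) (P : alcp_interp R S) u :
  marg (@restr S A) (marginal P) u =
  \sum_(i : ai_idx P | restr A (w_val (ai_world i)) == u) ai_prob i.
Proof.
by rewrite (sum_marg_pred (fun i : ai_idx P => w_val (ai_world i)) (fun v => restr A v == u)).
Qed.

Lemma ai_prob_le_marg_restr (S A : {fset nat}) (P : alcp_interp R S) (i : ai_idx P) :
  ai_prob i <= marg (@restr S A) (marginal P) (restr A (w_val (ai_world i))).
Proof.
rewrite marg_restr_marginal (bigD1 i) //= lerDl sumr_ge0 // => k _; exact: ai_prob_ge0.
Qed.

Variables (S A : {fset nat}) (K : kb R) (P : alcp_interp R S) (Q : alcp_interp R (kb_lang K)).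
Local Notation uP i := (restr A (w_val (@ai_world _ _ P i))).
Local Notation uQ j := (restr A (w_val (@ai_world _ _ Q j))).
Let mA := marg (@restr S A) (marginal P).
Hypothesis margPQ : mA = marg (@restr (kb_lang K) A) (marginal Q).

(* The coupling of P and Q under which they are independent given their common
   marginal on A. *)
Definition glue_wt (k : ai_idx P * ai_idx Q) : R :=
  if uP k.1 == uQ k.2 then ai_prob k.1 * ai_prob k.2 / mA (uP k.1) else 0.

Lemma glue_wt_ge0 k : 0 <= glue_wt k.
Proof.
rewrite /glue_wt; case: ifP => // _.
rewrite divr_ge0 ?mulr_ge0 ?ai_prob_ge0 //.
exact: le_trans (ai_prob_ge0 _) (ai_prob_le_marg_restr A _).
Qed.

Lemma sum_glue_wt_fst i : \sum_j glue_wt (i, j) = ai_prob i.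
Proof.
rewrite /glue_wt -big_mkcond /=.
rewrite (eq_bigr (fun j => ai_prob i / mA (uP i) * ai_prob j)) => [|j _]; last first.
  by rewrite mulrAC.
rewrite -mulr_sumr (eq_bigl (fun j => uQ j == uP i)) => [|j]; last exact: eq_sym.
rewrite -marg_restr_marginal -margPQ divfK_bounded //; first exact: ai_prob_ge0.
exact: ai_prob_le_marg_restr.
Qed.

Lemma sum_glue_wt_snd j : \sum_i glue_wt (i, j) = ai_prob j.
Proof.
rewrite /glue_wt -big_mkcond /=.
rewrite (eq_bigr (fun i => ai_prob j / mA (uQ j) * ai_prob i)) => [|i /eqP ->]; last first.
  by rewrite [ai_prob i * _]mulrC mulrAC.
rewrite -mulr_sumr -marg_restr_marginal divfK_bounded //; first exact: ai_prob_ge0.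
by rewrite margPQ; exact: ai_prob_le_marg_restr.
Qed.

Lemma sum_glue_wt_pred_fst (F : pred (ai_idx P)) :
  \sum_(k | F k.1) glue_wt k = \sum_(i | F i) ai_prob i.
Proof.
rewrite -(eq_bigr _ (fun i _ => sum_glue_wt_fst i)) pair_big /=.
by apply: eq_bigl => -[i j] /=; rewrite andbT.
Qed.

Lemma sum_glue_wt_pred_snd (G : pred (ai_idx Q)) :
  \sum_(k | G k.2) glue_wt k = \sum_(j | G j) ai_prob j.
Proof.
rewrite -(eq_bigr _ (fun j _ => sum_glue_wt_snd j)) exchange_big pair_big /=.
by apply: eq_bigl => -[i j].
Qed.

Lemma glue_wt_sum1 : \sum_k glue_wt k = 1.
Proof. by rewrite (sum_glue_wt_pred_snd predT) ai_prob_sum1. Qed.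

Lemma sum_glue_wt_agree (G : pred (ai_idx P * ai_idx Q)) (F : pred (ai_idx P)) :
  (forall k, uP k.1 = uQ k.2 -> G k = F k.1) ->
  \sum_(k | G k) glue_wt k = \sum_(i | F i) ai_prob i.
Proof.
move=> GF; rewrite -sum_glue_wt_pred_fst big_mkcond [RHS]big_mkcond.
apply: eq_bigr => k _; rewrite /glue_wt; case: eqP => [/GF ->|_] //.
by case: (G k); case: (F k.1).
Qed.

Variable mk : world S -> world (kb_lang K) -> world (kb_lang K).
Hypothesis mk_val : forall I J, w_val (mk I J) = w_val J.

Definition glue_world (k : ai_idx P * ai_idx Q) : world (kb_lang K) :=
  if uP k.1 == uQ k.2 then mk (ai_world k.1) (ai_world k.2) else ai_world k.2.

Definition glue : alcp_interp R (kb_lang K) :=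
  ALCPInterp glue_world glue_wt_ge0 glue_wt_sum1.

Lemma glue_marginal : marginal glue = marginal Q.
Proof.
apply: funext => v; rewrite /marginal /=.
rewrite (eq_bigl (fun k => w_val (ai_world k.2) == v)) => [|k]; last first.
  by rewrite /glue_world; case: ifP; rewrite ?mk_val.
exact: (sum_glue_wt_pred_snd (fun j => w_val (ai_world j) == v)).
Qed.

Lemma glue_is_ME_model : is_ME_model Q ->
  (forall i j g, uP i = uQ j -> List.In g (kb_T K) ->
     models_gci (mk (ai_world i) (ai_world j)) g) ->
  is_ME_model glue.
Proof.
move=> [QT QME] mkT; split; last by rewrite glue_marginal.
move=> [i j] g gT; rewrite /= /glue_world; case: eqP => [e|_]; last exact: QT.
exact: mkT.
Qed.

Lemma glue_cond_prob C D kappa : in_lang A kappa ->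
  (forall I J, subsumed (mk I J) C D <-> subsumed I C D) ->
  cond_prob glue C D kappa = cond_prob P C D kappa.
Proof.
move=> kA mk_sub; rewrite /cond_prob /=.
by congr (_ / _); apply: sum_glue_wt_agree => k e;
  rewrite /glue_world e eqxx mk_val -(sat_eq_restr kA e) ?(propext (mk_sub _ _)).
Qed.

End Glue.

Definition merge_world (S S' : {fset nat}) (I : world S) (J : world S') (cs rs : pred nat)
    : world S' :=
  @World S' (w_dom I * w_dom J)%type (w_elt I, w_elt J)
    (fun a x => if cs a then @w_cext _ J a x.2 else @w_cext _ I a x.1)
    (* a role moves only its own side's coordinate, so existentials over it are
       evaluated in that side's world *)
    (fun r x y => if rs r then @w_rext _ J r x.2 y.2 /\ x.1 = y.1
                  else @w_rext _ I r x.1 y.1 /\ x.2 = y.2)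
    (w_val J).

Section MergeWorld.
Variables (S S' : {fset nat}) (I : world S) (J : world S') (cs rs : pred nat).
Let IJ := merge_world I J cs rs.

Lemma cext_merge_world_l E : all (predC cs) (cnames E) -> all (predC rs) (rnames E) ->
  forall x, @cext _ IJ E x <-> @cext _ I E x.1.
Proof.
elim: E => [a|E IH|E1 IH1 E2 IH2|r E IH] /=.
- by rewrite andbT => /negbTE -> _ x.
- move=> Ec Er x; have := IH Ec Er x; tauto.
- rewrite !all_cat => /andP[E1c E2c] /andP[E1r E2r] x.
  have := IH1 E1c E1r x; have := IH2 E2c E2r x; tauto.
- move=> Ec /andP[/negbTE -> Er] x; split.
    by case=> y [[rxy _] Ey]; exists y.1; split => //; apply/(IH Ec Er).
  case=> y1 [rxy Ey]; exists (y1, x.2); split => //; exact/(IH Ec Er).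
Qed.

Lemma cext_merge_world_r E : all cs (cnames E) -> all rs (rnames E) ->
  forall x, @cext _ IJ E x <-> @cext _ J E x.2.
Proof.
elim: E => [a|E IH|E1 IH1 E2 IH2|r E IH] /=.
- by rewrite andbT => -> _ x.
- move=> Ec Er x; have := IH Ec Er x; tauto.
- rewrite !all_cat => /andP[E1c E2c] /andP[E1r E2r] x.
  have := IH1 E1c E1r x; have := IH2 E2c E2r x; tauto.
- move=> Ec /andP[-> Er] x; split.
    by case=> y [[rxy _] Ey]; exists y.2; split => //; apply/(IH Ec Er).
  case=> y2 [rxy Ey]; exists (x.1, y2); split => //; exact/(IH Ec Er).
Qed.

Lemma subsumed_merge_world_l C D :
  all (predC cs) (cnames C ++ cnames D) -> all (predC rs) (rnames C ++ rnames D) ->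
  subsumed IJ C D <-> subsumed I C D.
Proof.
rewrite !all_cat => /andP[Cc Dc] /andP[Cr Dr]; split=> CD x.
  have := CD (x, w_elt J).
  by rewrite (cext_merge_world_l Cc Cr) (cext_merge_world_l Dc Dr); apply.
by rewrite (cext_merge_world_l Cc Cr) (cext_merge_world_l Dc Dr); apply: CD.
Qed.

Lemma subsumed_merge_world_r C D :
  all cs (cnames C ++ cnames D) -> all rs (rnames C ++ rnames D) ->
  subsumed J C D -> subsumed IJ C D.
Proof.
rewrite !all_cat => /andP[Cc Dc] /andP[Cr Dr] CD x.
by rewrite (cext_merge_world_r Cc Cr) (cext_merge_world_r Dc Dr); apply: CD.
Qed.

End MergeWorld.

Definition with_val (S S' : {fset nat}) (I : world S) (v : assignment S') : world S' :=
  @World S' (w_dom I) (w_elt I) (@w_cext _ I) (@w_rext _ I) v.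

Lemma cext_with_val (S S' : {fset nat}) (I : world S) (v : assignment S') E x :
  @cext _ (with_val I v) E x <-> @cext _ I E x.
Proof.
elim: E x => [a|E IH|E1 IH1 E2 IH2|r E IH] x /=.
- by [].
- have := IH x; tauto.
- have := IH1 x; have := IH2 x; tauto.
- by split; case=> y [rxy Ey]; exists y; split => //; apply/IH.
Qed.

Lemma subsumed_with_val (S S' : {fset nat}) (I : world S) (v : assignment S') C D :
  subsumed (with_val I v) C D <-> subsumed I C D.
Proof.
by split=> CD x; have := CD x; rewrite !cext_with_val.
Qed.

Lemma models_gci_merge_world_l (S S' A : {fset nat}) (I : world S) (J : world S')
    (cs rs : pred nat) g :
  in_lang A (g_ctx g) -> restr A (w_val I) = restr A (w_val J) ->
  all (predC cs) (cnames (g_lhs g) ++ cnames (g_rhs g)) ->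
  all (predC rs) (rnames (g_lhs g) ++ rnames (g_rhs g)) ->
  models_gci I g -> models_gci (merge_world I J cs rs) g.
Proof.
move=> gA IJ gc gr [g_off|g_sub]; first by left; rewrite /= -(sat_eq_restr gA IJ).
by right; apply/(subsumed_merge_world_l _ _ gc gr).
Qed.

Lemma models_gci_merge_world_r (S S' : {fset nat}) (I : world S) (J : world S')
    (cs rs : pred nat) g :
  all cs (cnames (g_lhs g) ++ cnames (g_rhs g)) ->
  all rs (rnames (g_lhs g) ++ rnames (g_rhs g)) ->
  models_gci J g -> models_gci (merge_world I J cs rs) g.
Proof.
move=> gc gr [g_off|g_sub]; first by left.
by right; apply: subsumed_merge_world_r gc gr g_sub.
Qed.

Lemma models_gci_with_val (S S' A : {fset nat}) (I : world S) (v : assignment S') g :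
  in_lang A (g_ctx g) -> restr A (w_val I) = restr A v ->
  models_gci I g -> models_gci (with_val I v) g.
Proof.
move=> gA Iv [g_off|g_sub]; first by left; rewrite /= -(sat_eq_restr gA Iv).
by right; apply/subsumed_with_val.
Qed.

Lemma mem_flatten_map_In (X : Type) (f : X -> seq nat) (s : seq X) x y :
  List.In x s -> y \in f x -> y \in flatten (map f s).
Proof.
elim: s => [//|z s IH] /= [<-|xs] yf; rewrite mem_cat ?yf //.
by rewrite IH ?orbT.
Qed.

Local Open Scope classical_set_scope.

Section DisjointUnion.
Variables (R : realType) (K1 K2 : kb R).
Hypotheses (wf1 : kb_wf K1) (wf2 : kb_wf K2) (disj : sig_disjoint K1 K2).
Let K12 := kb_union K1 K2.
Let A := [fset x in kb_lang K1 | x \notin sig_vars K2]%fset.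
Let cs : pred nat := fun a => a \in sig_cnames K2.
Let rs : pred nat := fun r => r \in sig_rnames K2.

Lemma all_mem_A (s : seq nat) :
  all (fun x => x \in kb_lang K1) s -> (forall x, x \in s -> x \notin sig_vars K2) ->
  all (fun x => x \in A) s.
Proof. by move=> sK1 sK2; apply/allP => x xs; rewrite !inE (allP sK1 x xs) sK2. Qed.

Lemma constraints1_in_A : constraints_in A (kb_R K1).
Proof.
have [sigR _ _] := disj; move=> c cin; apply: all_mem_A => [|x xc]; first exact: wf1.1.
apply: sigR; rewrite mem_cat (mem_flatten_map_In cin xc) //.
Qed.

Lemma constraints2_out_A : constraints_in (kb_lang K12 `\` A)%fset (kb_R K2).
Proof.
move=> c cin; apply/allP => x xc.
have xK2 : x \in sig_vars K2 by rewrite mem_cat (mem_flatten_map_In cin xc).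
by rewrite !inE (allP (wf2.1 c cin) x xc) xK2 orbT andbF.
Qed.

Lemma ctx1_in_A g : List.In g (kb_T K1) -> in_lang A (g_ctx g).
Proof.
have [sigR _ _] := disj; move=> gin; apply: all_mem_A => [|x xg]; first exact: wf1.2.
by apply: sigR; rewrite mem_cat (mem_flatten_map_In (f := fun g => pvars (g_ctx g)) gin xg) orbT.
Qed.

Lemma names1_not_in_K2 g : List.In g (kb_T K1) ->
  all (predC cs) (cnames (g_lhs g) ++ cnames (g_rhs g)) /\
  all (predC rs) (rnames (g_lhs g) ++ rnames (g_rhs g)).
Proof.
have [_ sigC sigR] := disj; move=> gin; split; apply/allP => a ain.
- exact/sigC/(mem_flatten_map_In (f := fun g => cnames (g_lhs g) ++ cnames (g_rhs g)) gin).
- exact/sigR/(mem_flatten_map_In (f := fun g => rnames (g_lhs g) ++ rnames (g_rhs g)) gin).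
Qed.

Lemma names2_in_K2 g : List.In g (kb_T K2) ->
  all cs (cnames (g_lhs g) ++ cnames (g_rhs g)) /\
  all rs (rnames (g_lhs g) ++ rnames (g_rhs g)).
Proof.
move=> gin; split; apply/allP => a ain.
- exact: (mem_flatten_map_In (f := fun g => cnames (g_lhs g) ++ cnames (g_rhs g)) gin).
- exact: (mem_flatten_map_In (f := fun g => rnames (g_lhs g) ++ rnames (g_rhs g)) gin).
Qed.

Lemma ME_models_marg_eq (X : alcp_interp R (kb_lang K1)) (Y : alcp_interp R (kb_lang K12)) :
  is_ME_model X -> is_ME_model Y ->
  marg (@restr _ A) (marginal X) = marg (@restr _ A) (marginal Y).
Proof.
move=> [_ MX] [_ MY]; apply: is_ME_marg_restr_eq constraints1_in_A constraints2_out_A MX MY.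
- by move=> x; rewrite !inE => /andP[].
- by move=> x; rewrite !inE => /andP[-> _].
Qed.

Variables (C D : concept) (kappa : pform).
Hypothesis kappaA : in_lang A kappa.

Lemma belief_values_sub_union :
  all (predC cs) (cnames C ++ cnames D) -> all (predC rs) (rnames C ++ rnames D) ->
  ME_consistent K12 ->
  belief_values K1 C D kappa `<=` belief_values K12 C D kappa.
Proof.
move=> CDc CDr [Y MY] _ [X [MX <-]].
exists (glue (ME_models_marg_eq MX MY) (fun I J => merge_world I J cs rs)); split.
- apply: glue_is_ME_model => // i j g e gT.
  case: (List.in_app_or _ _ _ gT) => [gT1|gT2].
  + have [gc gr] := names1_not_in_K2 gT1.
    exact: models_gci_merge_world_l (ctx1_in_A gT1) e gc gr (MX.1 i g gT1).
  + have [gc gr] := names2_in_K2 gT2; apply: models_gci_merge_world_r gc gr _.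
    by apply: MY.1; apply: List.in_or_app; right.
- by apply: glue_cond_prob => // I J; apply: subsumed_merge_world_l.
Qed.

Lemma belief_values_union_sub : ME_consistent K1 ->
  belief_values K12 C D kappa `<=` belief_values K1 C D kappa.
Proof.
move=> [X MX] _ [Z [MZ <-]].
exists (glue (esym (ME_models_marg_eq MX MZ)) (fun I J => with_val I (w_val J))); split.
- apply: glue_is_ME_model => // i j g e gT1.
  apply: models_gci_with_val (ctx1_in_A gT1) e _.
  by apply: MZ.1; apply: List.in_or_app; left.
- by apply: glue_cond_prob => // I J; apply: subsumed_with_val.
Qed.

End DisjointUnion.

Theorem theorem8 (R : realType) (K1 K2 : kb R) (C D : concept) (kappa : pform) :
  kb_wf K1 -> kb_wf K2 ->
  sig_disjoint K1 K2 ->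
  ME_consistent K1 ->
  ME_consistent (kb_union K1 K2) ->
  in_lang (kb_lang K1) kappa ->
  (forall x, x \in pvars kappa -> x \notin sig_vars K2) ->
  (forall A, A \in cnames C ++ cnames D -> A \notin sig_cnames K2) ->
  (forall r, r \in rnames C ++ rnames D -> r \notin sig_rnames K2) ->
  belief_interval K1 C D kappa = belief_interval (kb_union K1 K2) C D kappa.
Proof.
move=> wf1 wf2 disj cons1 cons12 kappa1 kappa2 CD_cnames CD_rnames.
have kappaA := all_mem_A kappa1 kappa2.
have CDc : all (predC (fun a => a \in sig_cnames K2)) (cnames C ++ cnames D) by apply/allP.
have CDr : all (predC (fun r => r \in sig_rnames K2)) (rnames C ++ rnames D) by apply/allP.
rewrite /belief_interval.
suff -> : belief_values K1 C D kappa = belief_values (kb_union K1 K2) C D kappa by [].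
apply/seteqP; split.
- exact: (belief_values_sub_union wf1 wf2 disj kappaA CDc CDr cons12).
- exact: (belief_values_union_sub wf1 wf2 disj kappaA cons1).
Qed.
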